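(* Let $k\ge 2$ be an integer and $n=2k$. For every positive integer $s$, $$\alpha\big(I_{B_{2k}}^{(s(k-1))}\big)=sk.$$
   Context: Let $\mathbb{K}$ be a field. $Q_n$ is the cycle graph on vertices $1,\dots,n$ (edges $\{i,i+1\}$ for $1\le i\le n-1$ and $\{n,1\}$). $B_n$ is the simplicial complex on $\{0,\dots,n+1\}$ whose facets are $\{0,i,j\}$ and $\{n+1,i,j\}$ for each edge $\{i,j\}$ of $Q_n$ (boundary of the bipyramid over the $n$-gon), and $I_{B_n}\subset R=\mathbb{K}[x_0,\dots,x_{n+1}]$ is its Stanley-Reisner ideal, generated by $\prod_{i\in\tau}x_i$ over non-faces $\tau$. For a homogeneous ideal $I$, $I^{(m)}=R\cap\bigcap_{P\in\mathrm{Ass}(I)}I^mR_P$ and $\alpha(I)=\min\{t: I_t\ne 0\}$. *)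

From HB Require Import structures.
From mathcomp Require Import all_boot all_order all_algebra.
From mathcomp Require Import mpoly.
Set Implicit Arguments. Unset Strict Implicit. Unset Printing Implicit Defensive.
Import GRing.Theory.
Local Open Scope ring_scope.

Section Ideals.
Variable R : comNzRingType.

Definition gen_ideal (S : R -> Prop) (f : R) : Prop :=
  exists l : seq (R * R), (forall p, p \in l -> S p.2) /\
    f = \sum_(p <- l) p.1 * p.2.

Definition pow_ideal (I : R -> Prop) (m : nat) : R -> Prop :=
  gen_ideal (fun f => exists l : seq R,
     size l = m /\ (forall g, g \in l -> I g) /\ f = \prod_(g <- l) g).

Definition is_ideal (P : R -> Prop) : Prop :=
  [/\ P 0, (forall a b, P a -> P b -> P (a + b)) &
      (forall a b, P b -> P (a * b))].

Definition is_prime_ideal (P : R -> Prop) : Prop :=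
  is_ideal P /\ ~ P 1 /\ (forall a b, P (a * b) -> P a \/ P b).

Definition Ass (I : R -> Prop) (P : R -> Prop) : Prop :=
  is_prime_ideal P /\ exists h : R, forall f, P f <-> I (f * h).

(* symbolic power I^(m) = R ∩ ⋂_{P ∈ Ass I} I^m R_P ;
   f/1 ∈ I^m R_P  iff  u f ∈ I^m for some u ∉ P *)
Definition symb_pow (I : R -> Prop) (m : nat) (f : R) : Prop :=
  forall P, Ass I P -> exists u, ~ P u /\ pow_ideal I m (u * f).
End Ideals.

Definition is_alpha (N : nat) (K : fieldType) (I : {mpoly K[N]} -> Prop)
    (al : nat) : Prop :=
  (exists f : {mpoly K[N]}, f != 0 /\ f \is al.-homog /\ I f) /\
  (forall (t : nat) (f : {mpoly K[N]}), f != 0 -> f \is t.-homog -> I f ->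
      (al <= t)%N).

Definition SR_ideal (N : nat) (K : fieldType) (face : {set 'I_N} -> bool)
  : {mpoly K[N]} -> Prop :=
  gen_ideal (fun f => exists tau : {set 'I_N},
     ~~ face tau /\ f = \prod_(i in tau) 'X_i).

Definition Qedge (n i j : nat) : bool :=
  ((1 <= i) && (i < n) && (j == i.+1))%N || ((i == n) && (j == 1%N)).
Definition Qadj (n i j : nat) : bool := Qedge n i j || Qedge n j i.

(* B_n on vertices {0,...,n+1} = 'I_(n.+2); a set is a face iff it is
   contained in some facet {0,i,j} or {n+1,i,j} with {i,j} an edge of Q_n *)
Definition B_face (n : nat) (tau : {set 'I_n.+2}) : bool :=
  [exists i : 'I_n.+2, exists j : 'I_n.+2,
     Qadj n i j &&
     ((tau \subset [set (inord 0 : 'I_n.+2); i; j]) ||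
      (tau \subset [set (inord n.+1 : 'I_n.+2); i; j]))].

Definition I_B (K : fieldType) (n : nat) : {mpoly K[n.+2]} -> Prop :=
  @SR_ideal n.+2 K (@B_face n).

From HB Require Import structures.
From mathcomp Require Import all_boot all_order all_algebra.
From mathcomp Require Import mpoly.
From mathcomp Require Import zify.
From Stdlib Require Classical_Prop.
Set Implicit Arguments. Unset Strict Implicit. Unset Printing Implicit Defensive.
Import GRing.Theory.
Local Open Scope ring_scope.

(* For a facet F of a simplicial complex, the prime P_F = (x_i : i \notin F)
   is associated to the Stanley-Reisner ideal, with witness x^F, and the
   P_F-adic order of a polynomial is its t-degree after x_i := t x_i for
   i \notin F.  Lower bound: each monomial of a nonzero element of
   I^(s(k-1)) has degree >= s(k-1) outside every facet {c, 2j+1, 2j+2},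
   c an apex; adding these inequalities over the perfect matching of the
   2k-cycle and over both apexes gives (k-1) deg >= k s (k-1).  Upper bound:
   every associated prime (I : h) misses x^F for a facet F containing the
   support of a monomial of h, and F contains at most one odd vertex, so
   (x^F)^(s(k-1)) prod_j x_(2j+1)^s is a multiple of s(k-1) non-face
   monomials x^F x_(2j+1); hence prod_j x_(2j+1)^s lies in I^(s(k-1)). *)

Section GeneratedIdeal.
Variable R : comNzRingType.
Implicit Types (S I Q : R -> Prop) (x y : R).

Lemma gen_ideal_ind S Q : is_ideal Q -> (forall x, S x -> Q x) ->
  forall x, gen_ideal S x -> Q x.
Proof.
move=> [Q0 QD QM] QS x [l [Sl ->]]; elim: l Sl => [|p l IH] Sl.
  by rewrite big_nil.
rewrite big_cons; apply: QD; first by apply/QM/QS/Sl; rewrite inE eqxx.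
by apply: IH => q ql; apply: Sl; rewrite inE ql orbT.
Qed.

Lemma gen_ideal_is_ideal S : is_ideal (gen_ideal S).
Proof.
split; first by exists [::]; rewrite big_nil.
  move=> a b [l1 [S1 ->]] [l2 [S2 ->]]; exists (l1 ++ l2); rewrite big_cat.
  by split=> // p; rewrite mem_cat => /orP[/S1|/S2].
move=> a b [l [Sl ->]]; exists [seq (a * p.1, p.2) | p <- l]; split.
  by move=> p /mapP[q ql ->] /=; apply: Sl.
by rewrite big_map mulr_sumr; apply: eq_bigr => p _; rewrite mulrA.
Qed.

Lemma gen_ideal_mem S x : S x -> gen_ideal S x.
Proof.
by move=> Sx; exists [:: (1, x)]; rewrite big_seq1 mul1r; split=> // p /[1!inE] /eqP->.
Qed.

Lemma gen_ideal_sum S (T : eqType) (r : seq T) (F : T -> R) :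
  (forall i, i \in r -> gen_ideal S (F i)) -> gen_ideal S (\sum_(i <- r) F i).
Proof.
have [I0 ID _] := gen_ideal_is_ideal S.
elim: r => [|i r IH] Sr; first by rewrite big_nil.
rewrite big_cons; apply: ID; first by apply: Sr; rewrite inE eqxx.
by apply: IH => j jr; apply: Sr; rewrite inE jr orbT.
Qed.

Lemma gen_idealMl S x y : gen_ideal S y -> gen_ideal S (x * y).
Proof. by case: (gen_ideal_is_ideal S) => _ _; apply. Qed.

Lemma pow_ideal0 I : pow_ideal I 0 1.
Proof. by apply: gen_ideal_mem; exists [::]; rewrite big_nil. Qed.

Lemma pow_ideal1 I x : I x -> pow_ideal I 1 x.
Proof.
move=> Ix; apply: gen_ideal_mem; exists [:: x]; rewrite big_seq1.
by split=> //; split=> // g /[1!inE] /eqP->.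
Qed.

Lemma pow_idealM I a b x y :
  pow_ideal I a x -> pow_ideal I b y -> pow_ideal I (a + b) (x * y).
Proof.
have [I0 ID IM] := gen_ideal_is_ideal
  (fun f => exists l, size l = (a + b)%N /\ (forall g, g \in l -> I g) /\
                      f = \prod_(g <- l) g).
move=> Ix; move: x Ix y; apply: gen_ideal_ind.
  split=> [y _|x1 x2 h1 h2 y Iy|z x h y Iy]; first by rewrite mul0r.
    by rewrite mulrDl; apply: ID; [apply: h1|apply: h2].
  by rewrite -mulrA; apply/IM/h.
move=> x [l [sl [Il ->]]]; apply: gen_ideal_ind.
  split=> [|y1 y2|z y]; first by rewrite mulr0.
    by rewrite mulrDr; apply: ID.
  by rewrite mulrCA; apply: IM.
move=> y [l' [sl' [Il' ->]]]; apply: gen_ideal_mem; exists (l ++ l').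
rewrite size_cat sl sl' big_cat; split=> //; split=> // g.
by rewrite mem_cat => /orP[/Il|/Il'].
Qed.

Lemma pow_idealX I a x e : pow_ideal I a x -> pow_ideal I (a * e) (x ^+ e).
Proof.
move=> Ix; elim: e => [|e IH]; first by rewrite muln0 expr0; apply: pow_ideal0.
by rewrite exprS mulnS; apply: pow_idealM.
Qed.

Lemma pow_ideal_prod I a (T : eqType) (r : seq T) (F : T -> R) :
  (forall i, i \in r -> pow_ideal I a (F i)) ->
  pow_ideal I (a * size r) (\prod_(i <- r) F i).
Proof.
elim: r => [|i r IH] Ir; first by rewrite big_nil muln0; apply: pow_ideal0.
rewrite big_cons mulnS; apply: pow_idealM; first by apply: Ir; rewrite inE eqxx.
by apply: IH => j jr; apply: Ir; rewrite inE jr orbT.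
Qed.

End GeneratedIdeal.

Definition order_ge (R : comNzRingType) (m : nat) (p : {poly R}) : Prop :=
  forall i, (i < m)%N -> p`_i = 0.

Section OrderGe.
Variable R : comNzRingType.
Implicit Types p q : {poly R}.

Lemma order_ge1 p : order_ge 1 p <-> p`_0 = 0.
Proof. by split=> [/(_ 0%N isT)//|p0 [|]]. Qed.

Lemma order_geM a b p q : order_ge a p -> order_ge b q -> order_ge (a + b) (p * q).
Proof.
move=> pa qb i ltiab; rewrite coefM big1 // => j _.
have [ltja|leaj] := ltnP j a; first by rewrite pa ?mul0r.
by rewrite qb ?mulr0 //; have := ltn_ord j; lia.
Qed.

Lemma order_ge_rmorph_ideal (T : comNzRingType) (f : {rmorphism T -> {poly R}}) m :
  is_ideal (fun x => order_ge m (f x)).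
Proof.
split=> [i _|x y fx fy i lti|x y fy]; first by rewrite rmorph0 coef0.
  by rewrite rmorphD coefD fx ?fy ?addr0.
by rewrite rmorphM -[m]add0n; apply: order_geM.
Qed.

End OrderGe.

Section OrderGeIdomain.
Variable R : idomainType.
Implicit Types p q : {poly R}.

Lemma order_ge1M p q : order_ge 1 (p * q) -> order_ge 1 p \/ order_ge 1 q.
Proof.
rewrite !order_ge1 coef0M => /eqP; rewrite mulf_eq0.
by case/orP=> /eqP; [left|right].
Qed.

Lemma order_ge_cancel m p q : p`_0 != 0 -> order_ge m (p * q) -> order_ge m q.
Proof.
move=> p0; elim: m => [//|m IH] pqm.
have qm : order_ge m q by apply: IH => i ltim; apply: pqm; apply: ltnW.
move=> i; rewrite ltnS leq_eqVlt => /orP[/eqP->|]; last exact: qm.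
have := pqm m (ltnSn m); rewrite coefM big_ord_recl subn0 big1 ?addr0.
  by move/eqP; rewrite mulf_eq0 (negbTE p0) => /eqP.
by move=> j _; rewrite qm ?mulr0 //=; have := ltn_ord j; rewrite /bump /=; lia.
Qed.

End OrderGeIdomain.

Lemma pow_ideal_order_ge (T R : comNzRingType) (f : {rmorphism T -> {poly R}})
    (I : T -> Prop) m x :
  (forall y, I y -> order_ge 1 (f y)) -> pow_ideal I m x -> order_ge m (f x).
Proof.
move=> If; move: x; apply: gen_ideal_ind; first exact: order_ge_rmorph_ideal.
move=> _ [l [<- [Il ->]]]; elim: l Il => [|y l IH] Il; first by [].
rewrite big_cons rmorphM; apply: (@order_geM _ 1 (size l)); first by apply/If/Il; rewrite inE eqxx.
by apply: IH => z zl; apply: Il; rewrite inE zl orbT.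
Qed.

Section Grading.
Variables (N : nat) (K : fieldType).
Implicit Types (F tau : {set 'I_N}) (b : 'X_{1..N}) (g : {mpoly K[N]}).

Definition Xprod tau : {mpoly K[N]} := \prod_(i in tau) 'X_i.

Definition mnm_supp b : {set 'I_N} := [set i | (0 < b i)%N].

Definition outdeg F b : nat := (\sum_(i | i \notin F) b i)%N.

(* [tgrade F] substitutes [t * x_i] for [x_i] when [i \notin F], so that
   [order_ge m (tgrade F g)] says that [g] lies in [P_F ^ m], where
   [P_F = (x_i : i \notin F)]. *)
Definition tvar F (i : 'I_N) : {poly {mpoly K[N]}} :=
  if i \in F then ('X_i)%:P else 'X * ('X_i)%:P.

Definition tgrade F : {mpoly K[N]} -> {poly {mpoly K[N]}} :=
  mmap (polyC \o @mpolyC N K) (tvar F).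

HB.instance Definition _ F := GRing.RMorphism.on (tgrade F).

Lemma mpolyXU_neq0 i : ('X_i : {mpoly K[N]}) != 0.
Proof.
apply/eqP => /(congr1 (mcoeff U_(i))).
by rewrite mcoeffXU eqxx mcoeff0 => /eqP; rewrite oner_eq0.
Qed.

Lemma Xprod_neq0 tau : Xprod tau != 0.
Proof. by apply/prodf_neq0 => i _; apply: mpolyXU_neq0. Qed.

Lemma mpolyX_Xprod_dvd b tau :
  tau \subset mnm_supp b -> exists r, 'X_[b] = r * Xprod tau.
Proof.
move=> /subsetP tau_b; exists (\prod_i 'X_i ^+ (b i - (i \in tau))).
rewrite mpolyXE_id /Xprod [X in _ = _ * X]big_mkcond -big_split /=.
apply: eq_bigr => i _; case: ifP => [itau|_]; last by rewrite subn0 mulr1.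
by rewrite -exprSr subn1 prednK //; have := tau_b i itau; rewrite inE.
Qed.

Lemma outdeg_mdeg F b : (outdeg F b + \sum_(i in F) b i)%N = mdeg b.
Proof. by rewrite mdegE [RHS](bigID (mem F)) addnC. Qed.

Lemma outdeg_gt0 F b : (0 < outdeg F b)%N = ~~ (mnm_supp b \subset F).
Proof.
rewrite lt0n sum_nat_eq0; congr negb; apply/forall_inP/subsetP => supp_b i.
  by rewrite inE; apply: contraTT => iF; rewrite lt0n negbK supp_b.
by move=> iF; rewrite -leqn0 leqNgt; apply: contra iF => bi; apply: supp_b; rewrite inE.
Qed.

Lemma mmap1_tvar F b : mmap1 (tvar F) b = 'X_[b] *: 'X^(outdeg F b).
Proof.
rewrite /mmap1 (eq_bigr (fun i => ('X_i ^+ b i)%:P * 'X^(if i \in F then 0 else b i)%N)).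
  rewrite big_split /= -rmorph_prod -mpolyXE_id mul_polyC /outdeg -prodrXr.
  by rewrite [in RHS]big_mkcond; congr (_ *: _); apply: eq_bigr => i _; case: ifP.
by move=> i _; rewrite /tvar; case: ifP => _; rewrite ?exprMn rmorphXn ?expr0 ?mulr1 // mulrC.
Qed.

Lemma mcoeff_tgrade F g d b :
  ((tgrade F g)`_d)@_b = if outdeg F b == d then g@_b else 0.
Proof.
have -> : tgrade F g = \sum_(m <- msupp g) (g@_m *: 'X_[m]) *: 'X^(outdeg F m).
  by apply: eq_bigr => m _; rewrite mmap1_tvar /= mul_polyC scalerA mul_mpolyC.
rewrite coef_sumMXn raddf_sum /=.
under eq_bigr => m _ do rewrite mcoeffZ mcoeffX.
have [bg|bNg] := boolP (b \in msupp g); last first.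
  rewrite (memN_msupp_eq0 bNg) if_same big_seq_cond big1 // => m /andP[mg _].
  by case: eqP => [mb|_]; [rewrite -mb mg in bNg | rewrite mulr0].
rewrite big_mkcond (bigD1_seq b) ?msupp_uniq //= big1 ?addr0.
  by case: eqP; rewrite ?eqxx ?mulr1.
by move=> m mNb; rewrite eq_sym (negbTE mNb) mulr0; case: ifP.
Qed.

Lemma order_ge_tgrade_supp F m g b :
  order_ge m (tgrade F g) -> b \in msupp g -> (m <= outdeg F b)%N.
Proof.
move=> gm bg; rewrite leqNgt; apply/negP => /gm /(congr1 (mcoeff b)).
by rewrite mcoeff_tgrade eqxx mcoeff0 => /eqP; rewrite mcoeff_eq0 bg.
Qed.

Lemma not_order_ge1_tgrade F g b :
  b \in msupp g -> mnm_supp b \subset F -> ~ order_ge 1 (tgrade F g).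
Proof. by move=> bg bF /order_ge_tgrade_supp /(_ bg); rewrite outdeg_gt0 bF. Qed.

Lemma tgradeX F i : tgrade F 'X_i = tvar F i.
Proof. by rewrite /tgrade mmapX mmap1U. Qed.

Lemma tgrade_Xprod F tau : tgrade F (Xprod tau) = \prod_(i in tau) tvar F i.
Proof. by rewrite /Xprod rmorph_prod; apply: eq_bigr => i _; rewrite /= tgradeX. Qed.

Lemma tgrade_XprodF F : tgrade F (Xprod F) = (Xprod F)%:P.
Proof. by rewrite tgrade_Xprod rmorph_prod; apply: eq_bigr => i iF; rewrite /tvar iF. Qed.

Lemma order_ge1_tvar F i : i \notin F -> order_ge 1 (tvar F i).
Proof. by move=> iNF; rewrite order_ge1 /tvar (negbTE iNF) -mulrC coefMX. Qed.

End Grading.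

Section StanleyReisner.
Variables (N : nat) (K : fieldType) (face : {set 'I_N} -> bool).
Implicit Types (F tau sigma : {set 'I_N}) (g h : {mpoly K[N]}).
Local Notation I := (@SR_ideal N K face).
Local Notation P_ F := (fun g => order_ge 1 (tgrade F g)).

Definition full_face F := forall tau, tau \subset F -> face tau.

Definition is_facet F := full_face F /\ forall x, x \notin F -> ~~ face (x |: F).

Lemma SR_ideal_mulXprod r tau : ~~ face tau -> I (r * Xprod K tau).
Proof. by move=> tauN; apply/gen_idealMl/gen_ideal_mem; exists tau. Qed.

Lemma SR_ideal_supp g : (forall b, b \in msupp g -> ~~ face (mnm_supp b)) -> I g.
Proof.
move=> gN; rewrite (mpolyE g); apply: gen_ideal_sum => b bg.
have [r ->] := @mpolyX_Xprod_dvd _ K b _ (subxx _).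
by rewrite -mul_mpolyC mulrA; apply/SR_ideal_mulXprod/gN.
Qed.

Lemma SR_notin_face_supp g : ~ I g -> exists2 b, b \in msupp g & face (mnm_supp b).
Proof.
move=> gNI; apply: Classical_Prop.NNPP => nob; apply/gNI/SR_ideal_supp => b bg.
by apply/negP => bface; apply: nob; exists b.
Qed.

Lemma SR_ideal_sub_prime F : full_face F -> forall g, I g -> P_ F g.
Proof.
move=> Ffull; apply: gen_ideal_ind; first exact: order_ge_rmorph_ideal.
move=> _ [tau [tauN ->]]; have /subsetPn[i itau iNF] : ~~ (tau \subset F).
  by apply: contra tauN; apply: Ffull.
rewrite tgrade_Xprod (bigD1 i) //= -[1%N]addn0.
by apply: order_geM (order_ge1_tvar _ iNF) _ => j.
Qed.

Lemma SR_Ass_facet F : is_facet F -> Ass I (P_ F).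
Proof.
move=> [Ffull Fmax]; split.
  split; first exact: order_ge_rmorph_ideal.
  split=> [|g h]; last by rewrite rmorphM; apply: order_ge1M.
  by rewrite rmorph1 order_ge1 coef1 => /eqP; rewrite oner_eq0.
exists (Xprod K F) => g; split=> [gP|gFI].
  rewrite (mpolyE g) mulr_suml; apply: gen_ideal_sum => b bg.
  have /subsetPn[i ib iNF] : ~~ (mnm_supp b \subset F).
    by rewrite -outdeg_gt0; apply: order_ge_tgrade_supp gP bg.
  have [r ->] : exists r, 'X_[b] = r * Xprod K [set i].
    by apply: mpolyX_Xprod_dvd; rewrite sub1set.
  rewrite -scalerAl -mul_mpolyC /Xprod big_set1 -!mulrA -big_setU1 //= mulrA.
  exact/SR_ideal_mulXprod/Fmax.
move: (SR_ideal_sub_prime Ffull gFI).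
rewrite rmorphM /= tgrade_XprodF mulrC => /order_ge_cancel; apply.
by rewrite coefC eqxx Xprod_neq0.
Qed.

Lemma symb_pow_outdeg F m g b :
  is_facet F -> symb_pow I m g -> b \in msupp g -> (m <= outdeg F b)%N.
Proof.
move=> Ffacet gsymb; have [u [uNP /(pow_ideal_order_ge (SR_ideal_sub_prime Ffacet.1))]] :=
  gsymb _ (SR_Ass_facet Ffacet).
rewrite rmorphM => /order_ge_cancel gm; apply: order_ge_tgrade_supp.
by apply: gm; apply: contra_notN uNP => /eqP /order_ge1.
Qed.

Lemma Ass_SR_avoid P : Ass I P -> exists2 sigma, face sigma &
  forall F e, sigma \subset F -> full_face F -> ~ P (Xprod K F ^+ e).
Proof.
move=> [[_ [P1N _]] [h Ph]]; have [|b bh bface] := @SR_notin_face_supp h.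
  by move=> hI; apply/P1N/Ph; rewrite mul1r.
exists (mnm_supp b) => // F e bF Ffull /Ph /(SR_ideal_sub_prime Ffull).
rewrite rmorphM rmorphXn /= tgrade_XprodF -rmorphXn => /order_ge_cancel.
rewrite coefC eqxx expf_neq0 ?Xprod_neq0 // => /(_ isT).
exact: not_order_ge1_tgrade bh bF.
Qed.

End StanleyReisner.

Lemma card_set3_le (T : finType) (x y z : T) : (#|[set x; y; z]| <= 3)%N.
Proof. by rewrite -setUA cardsU1 cards2; case: (_ \notin _); case: (_ != _). Qed.

Section Bipyramid.
Variable n : nat.
Implicit Types (c a b : 'I_n.+2) (tau : {set 'I_n.+2}).

Definition apex c : Prop := c = inord 0 \/ c = inord n.+1.

Definition B_facet c a b : Prop := apex c /\ Qadj n a b.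

Lemma apex_val c : apex c -> (c : nat) = 0%N \/ (c : nat) = n.+1.
Proof. by case=> ->; [left|right]; rewrite inordK. Qed.

Lemma Qadj_cases (i j : nat) : Qadj n i j ->
  [\/ [/\ 1 <= i, i < n & j = i.+1], [/\ 1 <= j, j < n & i = j.+1],
      i = n /\ j = 1 | j = n /\ i = 1]%N.
Proof.
rewrite /Qadj /Qedge => /orP[]/orP[]/andP[].
- by move=> /andP[? ?] /eqP ?; constructor 1.
- by move=> /eqP ? /eqP ?; constructor 3.
- by move=> /andP[? ?] /eqP ?; constructor 2.
- by move=> /eqP ? /eqP ?; constructor 4.
Qed.

Lemma B_face_sub_facet tau :
  B_face tau -> exists c a b, B_facet c a b /\ tau \subset [set c; a; b].
Proof.
case/existsP=> a /existsP[b /andP[ab /orP[]]] tauF.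
  by exists (inord 0), a, b; split=> //; split=> //; left.
by exists (inord n.+1), a, b; split=> //; split=> //; right.
Qed.

Hypothesis n_ge2 : (2 <= n)%N.

Lemma B_facet_card c a b : B_facet c a b -> #|[set c; a; b]| = 3.
Proof.
move=> [/apex_val cv /Qadj_cases ab].
rewrite -setUA cardsU1 cards2 !inE negb_or -!(inj_eq val_inj) /=.
by case: ab => [[]|[]|[]|[]]; lia.
Qed.

Lemma B_facet_is_facet c a b : B_facet c a b -> is_facet (@B_face n) [set c; a; b].
Proof.
move=> Fc; split=> [tau tauF|x xNF].
  apply/existsP; exists a; apply/existsP; exists b; rewrite Fc.2.
  by case: Fc.1 => <-; rewrite tauF ?orbT.
apply/negP => /B_face_sub_facet[c' [a' [b' [_ /subset_leq_card]]]].
rewrite cardsU1 xNF B_facet_card //.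
by move/leq_trans/(_ (card_set3_le c' a' b')).
Qed.

End Bipyramid.

Lemma dhomog_prodX (N : nat) (K : fieldType) (l : nat) (f : nat -> 'I_N) :
  \prod_(j < l) ('X_(f j) : {mpoly K[N]}) \is l.-homog.
Proof.
elim: l => [|l IH]; first by rewrite big_ord0 dhomog1.
have Xl : ('X_(f l) : {mpoly K[N]}) \is 1.-homog by rewrite dhomogX /= mdeg1.
by rewrite big_ord_recr /= -addn1 (dhomogM IH Xl).
Qed.

Section EvenBipyramid.
Variables (K : fieldType) (k : nat).
Local Notation IB := (@I_B K (2 * k)).
Implicit Types (c a b : 'I_(2 * k).+2) (j : nat).

Definition odd_vertex j : 'I_(2 * k).+2 := inord (2 * j + 1).
Definition even_vertex j : 'I_(2 * k).+2 := inord (2 * j + 2).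

Lemma odd_vertexE j : (j < k)%N -> odd_vertex j = (2 * j + 1)%N :> nat.
Proof. by move=> jk; rewrite inordK //; lia. Qed.

Lemma even_vertexE j : (j < k)%N -> even_vertex j = (2 * j + 2)%N :> nat.
Proof. by move=> jk; rewrite inordK //; lia. Qed.

Lemma B_facet_matching c j : apex c -> (j < k)%N ->
  B_facet c (odd_vertex j) (even_vertex j).
Proof.
move=> cA jk; split=> //; rewrite /Qadj /Qedge odd_vertexE ?even_vertexE //.
by apply/orP; left; apply/orP; left; apply/andP; split; [apply/andP; split|]; lia.
Qed.

(* An edge of the cycle has at most one odd endpoint, and the apexes are not
   odd vertices. *)
Lemma B_facet_odd_vertex_uniq c a b j1 j2 : B_facet c a b ->
  (j1 < k)%N -> (j2 < k)%N -> odd_vertex j1 \in [set c; a; b] ->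
  odd_vertex j2 \in [set c; a; b] -> j1 = j2.
Proof.
move=> [/apex_val cv /Qadj_cases ab] j1k j2k.
rewrite !inE -!(inj_eq val_inj) /= !odd_vertexE //.
by move=> /orP[/orP[]|] /eqP e1 /orP[/orP[]|] /eqP e2;
  case: ab => [[]|[]|[]|[]]; lia.
Qed.

Definition odd_monomial s : {mpoly K[(2 * k).+2]} :=
  \prod_(j < k) 'X_(odd_vertex j) ^+ s.

Lemma odd_monomial_neq0 s : odd_monomial s != 0.
Proof. by apply/prodf_neq0 => j _; rewrite expf_neq0 // mpolyXU_neq0. Qed.

Lemma odd_monomial_homog s : odd_monomial s \is (s * k).-homog.
Proof. by rewrite /odd_monomial prodrXl [(s * k)%N]mulnC dhomogMn // dhomog_prodX. Qed.

Hypothesis k_ge2 : (2 <= k)%N.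

Lemma pow_ideal_facet_odd_monomial s c a b : B_facet c a b ->
  pow_ideal IB (s * (k - 1)) (Xprod K [set c; a; b] ^+ (s * (k - 1)) * odd_monomial s).
Proof.
move=> Fc; set F := [set c; a; b].
have [j0 j0_only] : exists j0 : 'I_k, forall j : 'I_k, j != j0 -> odd_vertex j \notin F.
  case: (pickP (fun j : 'I_k => odd_vertex j \in F)) => [j0 j0F|noF].
    exists j0 => j; apply: contraNN => jF; apply/eqP/val_inj.
    exact: B_facet_odd_vertex_uniq Fc (ltn_ord j) (ltn_ord j0) jF j0F.
  by exists (Ordinal (ltnW k_ge2)) => j _; rewrite noF.
have -> : odd_monomial s =
    'X_(odd_vertex j0) ^+ s * \prod_(j in [set~ j0]) 'X_(odd_vertex j) ^+ s.
  by rewrite /odd_monomial (bigD1 j0) //=; congr (_ * _); apply: eq_bigl => j; rewrite !inE.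
have -> : Xprod K F ^+ (s * (k - 1)) = \prod_(j in [set~ j0]) Xprod K F ^+ s.
  by rewrite prodr_const cardsC1 card_ord subn1 exprM.
rewrite mulrCA -big_split -big_enum /=; apply: gen_idealMl.
have -> : (k - 1 = size (enum [set~ j0]))%N by rewrite -cardE cardsC1 card_ord subn1.
apply: pow_ideal_prod => j; rewrite mem_enum !inE => /j0_only jNF.
rewrite -exprMn -[X in pow_ideal _ X]mul1n; apply/pow_idealX/pow_ideal1.
rewrite mulrC -[_ * _]mul1r /Xprod -big_setU1 //=.
apply/SR_ideal_mulXprod/(B_facet_is_facet _ Fc).2 => //; lia.
Qed.

Lemma odd_monomial_symb_pow s : symb_pow IB (s * (k - 1)) (odd_monomial s).
Proof.
move=> P /Ass_SR_avoid[sigma /B_face_sub_facet[c [a [b [Fc sigmaF]]]] avoid].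
exists (Xprod K [set c; a; b] ^+ (s * (k - 1))).
split; last exact: pow_ideal_facet_odd_monomial.
by apply: avoid => //; apply: (B_facet_is_facet _ Fc).1; lia.
Qed.

Lemma sum_bipyramid (g : 'I_(2 * k).+2 -> nat) :
  (\sum_i g i = g (inord 0) + \sum_(j < k) (g (odd_vertex j) + g (even_vertex j))
                + g (inord (2 * k).+1))%N.
Proof.
pose G i := g (inord i).
have sumG l : (\sum_(0 <= i < 2 * l + 1) G i =
               G 0 + \sum_(j < l) (G (2 * j + 1) + G (2 * j + 2)))%N.
  elim: l => [|l IH]; first by rewrite big_nat1 big_ord0 addn0.
  have -> : (2 * l.+1 + 1 = (2 * l + 1).+2)%N by lia.
  rewrite !big_nat_recr //= IH big_ord_recr /=.
  by rewrite -!addnA; do 3 congr (_ + _); congr G; lia.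
rewrite (eq_bigr (G \o val)) => [|i _]; last by rewrite /G /= inord_val.
rewrite -(big_mkord xpredT G) big_nat_recr //=.
by have := sumG k; rewrite addn1 => ->.
Qed.

Lemma outdeg_matching_facet c j (b : 'X_{1..(2 * k).+2}) : apex c -> (j < k)%N ->
  (outdeg [set c; odd_vertex j; even_vertex j] b
   + (b c + b (odd_vertex j) + b (even_vertex j)) = mdeg b)%N.
Proof.
move=> /apex_val cv jk; rewrite -(outdeg_mdeg [set c; odd_vertex j; even_vertex j] b); congr (_ + _).
have ov := odd_vertexE jk; have ev := even_vertexE jk.
rewrite -setUA big_setU1 /=; last by rewrite !inE negb_or -!(inj_eq val_inj) /= ov ev; lia.
rewrite big_setU1 /=; last by rewrite inE -(inj_eq val_inj) /= ov ev; lia.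
by rewrite big_set1 addnA.
Qed.

Lemma mdeg_bound_matching m (b : 'X_{1..(2 * k).+2}) :
  (forall c j, apex c -> (j < k)%N ->
     m <= outdeg [set c; odd_vertex j; even_vertex j] b)%N ->
  (k * m <= (k - 1) * mdeg b)%N.
Proof.
move=> bound; pose S := (\sum_(j < k) (b (odd_vertex j) + b (even_vertex j)))%N.
have apex_bound c : apex c -> (k * b c + S + k * m <= k * mdeg b)%N.
  move=> cA; rewrite -[k in (k * mdeg b)%N]card_ord -sum_nat_const.
  rewrite -[k in (k * b c)%N]card_ord -[k in (k * m)%N]card_ord -!sum_nat_const.
  rewrite -!big_split /=; apply: leq_sum => j _.
  by rewrite -(outdeg_matching_facet _ cA (ltn_ord j)) addnC !addnA leq_add2r
     -!addnA leq_add2r; apply: bound.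
have := apex_bound _ (or_introl erefl); have := apex_bound _ (or_intror erefl).
have := sum_bipyramid b; rewrite -mdegE -/S; clear apex_bound bound.
move: (mdeg b) (b (inord 0)) (b (inord (2 * k).+1)) S => t b0 b1 {}S -> H1 H0.
nia.
Qed.

End EvenBipyramid.

Theorem proposition3p12 (K : fieldType) (k : nat) (hk : (2 <= k)%N)
    (s : nat) (hs : (0 < s)%N) :
  is_alpha (symb_pow (@I_B K (2 * k)) (s * (k - 1))) (s * k).
Proof.
split.
  exists (odd_monomial K k s); split; first exact: odd_monomial_neq0.
  by split; [exact: odd_monomial_homog | exact: odd_monomial_symb_pow].
move=> t g g_neq0 g_homog g_symb; have lead_g := mlead_supp g_neq0.
have <- : mdeg (mlead g) = t := dhomog_mf g_homog lead_g.
have n_ge2 : (2 <= 2 * k)%N by lia.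
have := mdeg_bound_matching hk (m := s * (k - 1)) (b := mlead g).
move=> /(_ (fun c j cA jk => symb_pow_outdeg
  (B_facet_is_facet n_ge2 (B_facet_matching cA jk)) g_symb lead_g)).
by rewrite mulnA mulnC [(k * s)%N]mulnC leq_pmul2l ?subn_gt0.
Qed.
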